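(* Let $X_1,\ldots,X_{N_1+N_2}\in\mathbb{R}^D$ with $N_1,N_2\ge1$, viewed as two segments $\{X_n:n=1,\ldots,N_1\}$ and $\{X_n:n=N_1+1,\ldots,N_1+N_2\}$. For $0<t<N_1$, consider shifting the change point from $N_1$ to $N_1-t$, so that the segments become $\{X_n:n=1,\ldots,N_1-t\}$ and $\{X_n:n=N_1-t+1,\ldots,N_1+N_2\}$. Then the within-segment quadratic loss (sum of the quadratic losses of the two segments) is reduced by this operation if and only if $$\frac{N_1\,|\bar X_{0,N_1}-\bar X_{N_1-t,N_1}|^2}{N_1-t}>\frac{N_2\,|\bar X_{N_1,N_1+N_2}-\bar X_{N_1-t,N_1}|^2}{N_2+t},$$ where $\bar X_{n_1,n_2}$ denotes the sample mean of $\{X_n:n=n_1+1,\ldots,n_2\}$.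
   Context: Quadratic loss of a segment $x_a,\ldots,x_b\in\mathbb{R}^D$: $\sum_{n=a}^b|x_n-\bar x|^2$, where $\bar x$ is the sample mean of the segment and $|\cdot|$ is the Euclidean norm. *)

From mathcomp Require Import all_boot all_order all_algebra.
Set Implicit Arguments. Unset Strict Implicit. Unset Printing Implicit Defensive.
Import Order.TTheory GRing.Theory Num.Theory.
Local Open Scope ring_scope.

Definition sqnorm (R : realFieldType) (D : nat) (v : 'rV[R]_D) : R :=
  \sum_(i < D) v ord0 i ^+ 2.

Definition seg_mean (R : realFieldType) (D : nat) (X : nat -> 'rV[R]_D)
  (n1 n2 : nat) : 'rV[R]_D :=
  (n2 - n1)%:R^-1 *: \sum_(n1.+1 <= n < n2.+1) X n.

Definition seg_loss (R : realFieldType) (D : nat) (X : nat -> 'rV[R]_D)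
  (n1 n2 : nat) : R :=
  \sum_(n1.+1 <= n < n2.+1) sqnorm (X n - seg_mean X n1 n2).

From mathcomp Require Import all_boot all_order all_algebra.
From mathcomp Require Import ring lra zify.
Set Implicit Arguments. Unset Strict Implicit. Unset Printing Implicit Defensive.
Import Order.TTheory GRing.Theory Num.Theory.
Local Open Scope ring_scope.

(** Write the shortened first segment as A (a = N1 - t points), the moved points as B
   (t points) and the second segment as C (N2 points). Merging two adjacent segments of
   sizes p and q raises the quadratic loss by p q / (p + q) times the squared distance of
   their means. Hence both segmentations AB|C and A|BC cost loss(A) + loss(B) + loss(C)
   plus one merging term, so the loss decreases iff
   t N2 / (N2 + t) |m_C - m_B|^2 < a t / (a + t) |m_A - m_B|^2;
   finally m_AB - m_B = a / (a + t) (m_A - m_B) turns the right side into the one of the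
   statement. *)

(* No hypothesis [r != [::]] is needed: both sides vanish for [r = [::]] since [x / 0 = 0]. *)
Lemma sumr_sq_sub_mean (R : realFieldType) (I : Type) (r : seq I) (F : I -> R) :
  \sum_(i <- r) (F i - (\sum_(j <- r) F j) / (size r)%:R) ^+ 2
  = \sum_(i <- r) F i ^+ 2 - (\sum_(i <- r) F i) ^+ 2 / (size r)%:R.
Proof.
set S := \sum_(j <- r) F j; set m := S / _.
have expand i : (F i - m) ^+ 2 = F i ^+ 2 - (2 * m * F i - m ^+ 2) by ring.
rewrite (eq_bigr _ (fun i _ => expand i)) !sumrB -mulr_sumr -/S.
rewrite big_const_seq count_predT iter_addr_0 /m.
have [->|r_gt0] := posnP (size r); first by rewrite invr0; ring.
by rewrite -mulr_natr; field; rewrite pnatr_eq0 -lt0n.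
Qed.

Section SqNorm.
Variables (R : realFieldType) (D : nat).

Lemma sqnormZ (k : R) (v : 'rV[R]_D) : sqnorm (k *: v) = k ^+ 2 * sqnorm v.
Proof. by rewrite /sqnorm mulr_sumr; apply: eq_bigr => i _; rewrite mxE exprMn. Qed.

Lemma sqnormN (v : 'rV[R]_D) : sqnorm (- v) = sqnorm v.
Proof. by rewrite -scaleN1r sqnormZ sqrrN expr1n mul1r. Qed.

End SqNorm.

Section Segments.
Variables (R : realFieldType) (D : nat) (X : nat -> 'rV[R]_D).

Definition seg_sum (n1 n2 : nat) : 'rV[R]_D := \sum_(n1.+1 <= n < n2.+1) X n.

Lemma seg_sum_cat a b c : (a <= b)%N -> (b <= c)%N ->
  seg_sum a c = seg_sum a b + seg_sum b c.
Proof. by move=> ab bc; rewrite /seg_sum -big_cat_nat. Qed.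

Lemma seg_mean_coord n1 n2 j i :
  seg_mean X n1 n2 j i = seg_sum n1 n2 j i / (n2 - n1)%:R.
Proof. by rewrite mxE mulrC. Qed.

Lemma seg_loss_coord n1 n2 :
  seg_loss X n1 n2 = \sum_i (\sum_(n1.+1 <= n < n2.+1) X n ord0 i ^+ 2
                             - seg_sum n1 n2 ord0 i ^+ 2 / (n2 - n1)%:R).
Proof.
rewrite /seg_loss /sqnorm exchange_big; apply: eq_bigr => i _ /=.
under eq_bigr => n _ do rewrite 2!mxE seg_mean_coord.
have -> : (n2 - n1 = size (index_iota n1.+1 n2.+1))%N by rewrite size_iota subSS.
by rewrite /seg_sum summxE sumr_sq_sub_mean.
Qed.

Lemma seg_mean_merge a b c : (a < b)%N -> (b < c)%N ->
  seg_mean X a c - seg_mean X b c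
  = ((b - a)%:R / (c - a)%:R) *: (seg_mean X a b - seg_mean X b c).
Proof.
move=> ab bc; apply/rowP => i; rewrite !(seg_mean_coord, mxE).
rewrite (seg_sum_cat (ltnW ab) (ltnW bc)) mxE.
have -> : (c - a = (b - a) + (c - b))%N by lia.
rewrite natrD; field.
by rewrite -!natrD !pnatr_eq0; lia.
Qed.

Lemma seg_loss_merge a b c : (a < b)%N -> (b < c)%N ->
  seg_loss X a c = seg_loss X a b + seg_loss X b c
    + (b - a)%:R * (c - b)%:R / (c - a)%:R * sqnorm (seg_mean X a b - seg_mean X b c).
Proof.
move=> ab bc; rewrite !seg_loss_coord /sqnorm mulr_sumr -!big_split /=.
apply: eq_bigr => i _; rewrite !(seg_mean_coord, mxE).
rewrite (seg_sum_cat (ltnW ab) (ltnW bc)) mxE.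
rewrite (big_cat_nat (ltnW ab : a.+1 <= b.+1)%N (ltnW bc : b.+1 <= c.+1)%N) /=.
have -> : (c - a = (b - a) + (c - b))%N by lia.
rewrite natrD; field.
by rewrite -!natrD !pnatr_eq0; lia.
Qed.

End Segments.

Theorem proposition1 (R : realFieldType) (D : nat) (X : nat -> 'rV[R]_D)
  (N1 N2 t : nat) (hN1 : (1 <= N1)%N) (hN2 : (1 <= N2)%N)
  (ht0 : (0 < t)%N) (ht : (t < N1)%N) :
  (seg_loss X 0 (N1 - t) + seg_loss X (N1 - t) (N1 + N2)
     < seg_loss X 0 N1 + seg_loss X N1 (N1 + N2))
  <->
  (N2%:R * sqnorm (seg_mean X N1 (N1 + N2) - seg_mean X (N1 - t) N1)
     / (N2 + t)%:R
   < N1%:R * sqnorm (seg_mean X 0 N1 - seg_mean X (N1 - t) N1)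
     / (N1 - t)%:R).
Proof.
have [a a_gt0 ->] : exists2 a, (0 < a)%N & N1 = (a + t)%N by exists (N1 - t)%N; lia.
have a_lt_N1 : (a < a + t)%N by lia.
have N1_lt_N : (a + t < a + t + N2)%N by lia.
rewrite addnK (seg_loss_merge X a_gt0 a_lt_N1) (seg_loss_merge X a_lt_N1 N1_lt_N).
rewrite (seg_mean_merge X a_gt0 a_lt_N1) sqnormZ.
rewrite -[sqnorm (seg_mean X a _ - _)]sqnormN opprB !subn0 !addKn.
have -> : (a + t + N2 - a = N2 + t)%N by lia.
set dBC := sqnorm _; set dAB := sqnorm _.
have t_gt0 : 0 < t%:R :> R by rewrite ltr0n.
have a_neq0 : a%:R != 0 :> R by rewrite pnatr_eq0; lia.
have N1_neq0 : (a + t)%:R != 0 :> R by rewrite pnatr_eq0; lia.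
have -> : t%:R * N2%:R / (N2 + t)%:R * dBC = t%:R * (N2%:R * dBC / (N2 + t)%:R) by ring.
have -> : a%:R * t%:R / (a + t)%:R * dAB = t%:R * (a%:R / (a + t)%:R * dAB) by ring.
have -> : (a + t)%:R * ((a%:R / (a + t)%:R) ^+ 2 * dAB) / a%:R = a%:R / (a + t)%:R * dAB.
  by field; rewrite -natrD a_neq0 N1_neq0.
rewrite -(ltr_pM2l t_gt0 (N2%:R * dBC / _)); lra.
Qed.
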